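(* Let $G$ be a graph with girth at least $7$. If $G$ contains a path $s_1u_1vu_2s_2$ such that $s_1$ and $s_2$ are support vertices and, for each $i\in\{1,2\}$, $u_i$ is the only neighbor of $s_i$ having degree at least $2$, then $G\notin\mathcal U$.
   Context: All graphs are finite and simple. A set $P\subseteq V(G)$ is an open packing if no two distinct vertices of $P$ have a common neighbor; it is maximal if maximal under inclusion among open packings. $\rho^o(G)$ is the maximum size of an open packing and $\rho^o_L(G)$ the minimum size of a maximal open packing; $\mathcal U$ is the class of graphs with $\rho^o_L(G)=\rho^o(G)$. A leaf is a vertex of degree $1$; a support vertex is a vertex adjacent to at least one leaf. The girth is the length of a shortest cycle ($\infty$ if acyclic). *)

From mathcomp Require Import all_boot all_order.
Set Implicit Arguments. Unset Strict Implicit. Unset Printing Implicit Defensive.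

Definition simple_graph (T : finType) (e : rel T) : Prop :=
  symmetric e /\ irreflexive e.

Definition nbhd (T : finType) (e : rel T) (x : T) : {set T} := [set y | e x y].
Definition deg (T : finType) (e : rel T) (x : T) : nat := #|nbhd e x|.

Definition is_leaf (T : finType) (e : rel T) (x : T) : bool := deg e x == 1.
Definition is_support (T : finType) (e : rel T) (x : T) : bool :=
  [exists y, e x y && is_leaf e y].

Definition open_packing (T : finType) (e : rel T) (P : {set T}) : Prop :=
  forall x y z, x \in P -> y \in P -> x != y -> ~ (e x z && e y z).

Definition maximal_open_packing (T : finType) (e : rel T) (P : {set T}) : Prop :=
  open_packing e P /\
  forall Q : {set T}, open_packing e Q -> P \subset Q -> Q = P.

Definition is_rho_o (T : finType) (e : rel T) (k : nat) : Prop :=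
  (exists P, open_packing e P /\ #|P| = k) /\
  (forall P, open_packing e P -> #|P| <= k).

Definition is_rho_oL (T : finType) (e : rel T) (k : nat) : Prop :=
  (exists P, maximal_open_packing e P /\ #|P| = k) /\
  (forall P, maximal_open_packing e P -> k <= #|P|).

Definition in_U (T : finType) (e : rel T) : Prop :=
  exists k, is_rho_o e k /\ is_rho_oL e k.

Definition is_cycle (T : finType) (e : rel T) (c : seq T) : Prop :=
  3 <= size c /\ uniq c /\
  match c with
  | [::] => False
  | x :: _ => path e x (behead c) /\ e (last x c) x
  end.

Definition girth_at_least (T : finType) (e : rel T) (g : nat) : Prop :=
  forall c, is_cycle e c -> g <= size c.

From mathcomp Require Import all_boot all_order.
Set Implicit Arguments. Unset Strict Implicit. Unset Printing Implicit Defensive.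

(* Extend the open packing {u1, v} (u1 and v have no common
   neighbour since the girth is at least 7) to a maximal open packing P.
   Let l1 be a leaf adjacent to s1.  Trading u1 and v for l1, s1 and s2
   gives the set (P - {u1, v}) + {l1, s1, s2}, which is again an open
   packing: every neighbour of s_i other than u_i is a leaf hanging at s_i,
   so a common neighbour with a remaining vertex of P would force that
   vertex to share u_i with v, or to share s1 with u1.  This open packing
   is larger than the maximal open packing P, hence rho^o(G) > rho^o_L(G). *)

Definition no_common_nbr (T : finType) (e : rel T) (x y : T) : Prop :=
  forall z, e x z -> e y z -> False.

Definition pendant (T : finType) (e : rel T) (w s : T) : Prop :=
  forall z, e w z -> z = s.

Section GraphFacts.
Variables (T : finType) (e : rel T).

(* Boolean version of [open_packing], to use the [maxset] theory of finset. *)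
Definition open_packingb (P : {set T}) : bool :=
  [forall x in P, forall y in P, forall z, (x != y) ==> ~~ (e x z && e y z)].

Lemma open_packingP (P : {set T}) : reflect (open_packing e P) (open_packingb P).
Proof.
apply: (iffP forall_inP) => [H x y z xP yP xy | H x xP].
  by have /forall_inP /(_ y yP) /forallP /(_ z) := H x xP; rewrite xy => /negP.
apply/forall_inP => y yP; apply/forallP => z; apply/implyP => xy.
exact/negP/(H x y z).
Qed.

Lemma maximal_open_packingP (P : {set T}) :
  maximal_open_packing e P <-> maxset open_packingb P.
Proof.
split => [[HP Hmax] | /maxsetP [/open_packingP HP Hmax]].
  by apply/maxsetP; split => [|Q /open_packingP]; [exact/open_packingP | exact: Hmax].
by split => // Q /open_packingP; exact: Hmax.
Qed.

Lemma maximal_open_packing_ext (P : {set T}) :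
  open_packing e P -> exists2 M, maximal_open_packing e M & P \subset M.
Proof.
move/open_packingP/maxset_exists => [M HM PM].
by exists M => //; exact/maximal_open_packingP.
Qed.

Lemma open_packing_eq (P : {set T}) x y z :
  open_packing e P -> x \in P -> y \in P -> e x z -> e y z -> x = y.
Proof.
move=> HP xP yP xz yz; apply/eqP/negPn/negP => xy.
by apply: (HP x y z xP yP xy); rewrite xz yz.
Qed.

Lemma open_packingS (P Q : {set T}) : Q \subset P -> open_packing e P -> open_packing e Q.
Proof. by move=> /subsetP QP HP x y z /QP xP /QP yP; exact: HP. Qed.

Lemma open_packingU1 (P : {set T}) x :
  open_packing e P ->
  (forall y, y \in P -> y != x -> no_common_nbr e x y) ->
  open_packing e (x |: P).
Proof.
move=> HP Hx a b z; rewrite !inE.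
case: (eqVneq a x) => [-> | ax] /= aP; case: (eqVneq b x) => [-> | bx] /= bP;
  rewrite ?eqxx // => ab /andP [az bz].
- exact: (Hx b bP bx z az bz).
- exact: (Hx a aP ax z bz az).
- by apply: (HP a b z aP bP ab); rewrite az bz.
Qed.

Lemma open_packing_pair x y : no_common_nbr e x y -> open_packing e [set x; y].
Proof.
move=> Hxy; apply: open_packingU1 => [a b z | b]; rewrite !inE.
- by move=> /eqP -> /eqP ->; rewrite eqxx.
- by move=> /eqP ->.
Qed.

Lemma in_U_card_le (P Q : {set T}) :
  in_U e -> maximal_open_packing e P -> open_packing e Q -> #|Q| <= #|P|.
Proof.
move=> [k [[_ Hmax] [_ Hmin]]] HP HQ.
exact: leq_trans (Hmax Q HQ) (Hmin P HP).
Qed.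

Hypothesis e_sym : symmetric e.

Lemma pendant_of_deg w s : deg e w < 2 -> e s w -> pendant e w s.
Proof.
move=> Hd sw z wz; apply/eqP; apply: contraLR Hd => zs.
have <- : #|[set z; s]| = 2 by rewrite cards2 zs.
rewrite -leqNgt /deg subset_leq_card //.
by apply/subsetP => y; rewrite !inE => /orP [] /eqP ->; rewrite // e_sym.
Qed.

Lemma no_common_pendant x w s :
  pendant e w s -> ~~ e x s -> no_common_nbr e w x.
Proof. by move=> Hw xs z /Hw Ez xz; move: xs; rewrite -Ez xz. Qed.

Lemma no_common_support (P : {set T}) v u s x :
  open_packing e P -> v \in P -> x \in P -> x != v -> s != v ->
  e v u -> e s u -> (forall w, e s w -> w != u -> pendant e w s) ->
  no_common_nbr e s x.
Proof.
move=> HP vP xP xv sv vu su Hs z sz xz.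
case: (eqVneq z u) => [Ez | zu].
  by move: xv; rewrite (open_packing_eq HP xP vP (_ : e x u) vu) ?eqxx // -Ez.
have xs : x = s by apply: (Hs z sz zu); rewrite e_sym.
by move: sv; rewrite -xs (open_packing_eq HP xP vP (_ : e x u) vu) ?eqxx // xs.
Qed.

Lemma girth_no_closing_edge g x p :
  girth_at_least e g -> uniq (x :: p) -> 2 <= size p -> (size p).+1 < g ->
  path e x p -> ~~ e (last x p) x.
Proof.
move=> Hg Hu Hp Hsz Hpath; apply/negP => Hlast.
have := Hg (x :: p); rewrite /is_cycle /= ltnS Hp => /(_ (conj isT (conj Hu (conj Hpath Hlast)))).
by rewrite leqNgt Hsz.
Qed.

End GraphFacts.

Section Configuration.
Variables (T : finType) (e : rel T) (s1 u1 v u2 s2 l1 : T).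
Hypotheses (e_sym : symmetric e) (e_irr : irreflexive e).
Hypothesis girth7 : girth_at_least e 7.
Hypothesis path_uniq : uniq [:: s1; u1; v; u2; s2].
Hypotheses (s1u1 : e s1 u1) (u1v : e u1 v) (vu2 : e v u2) (u2s2 : e u2 s2).
Hypothesis deg_nbr_s1 : forall w, e s1 w -> (2 <= deg e w) = (w == u1).
Hypothesis deg_nbr_s2 : forall w, e s2 w -> (2 <= deg e w) = (w == u2).
Hypotheses (s1l1 : e s1 l1) (l1_leaf : is_leaf e l1).

Lemma adj_neq x y : e x y -> x != y.
Proof. by apply: contraTneq => ->; rewrite e_irr. Qed.

Lemma pendant_nbr_s1 w : e s1 w -> w != u1 -> pendant e w s1.
Proof. by move=> sw wu; apply: pendant_of_deg; rewrite // ltnNge deg_nbr_s1 // (negPf wu). Qed.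

Lemma pendant_nbr_s2 w : e s2 w -> w != u2 -> pendant e w s2.
Proof. by move=> sw wu; apply: pendant_of_deg; rewrite // ltnNge deg_nbr_s2 // (negPf wu). Qed.

Lemma l1_neq_u1 : l1 != u1.
Proof.
by apply: contraTneq l1_leaf => ->; rewrite /is_leaf; apply/negP => /eqP d1;
  move: (deg_nbr_s1 s1u1); rewrite d1 eqxx.
Qed.

Lemma pendant_l1 : pendant e l1 s1.
Proof. exact: pendant_nbr_s1 s1l1 l1_neq_u1. Qed.

(* Consequences of the girth bound: no triangle on u1 v, no 4-cycle
   u1 v u2 s2, no 5-cycle s1 u1 v u2 s2. *)
Lemma no_common_u1_v : no_common_nbr e u1 v.
Proof.
move=> z u1z vz.
have uniq_u1vz : uniq [:: u1; v; z].
  by rewrite /= !inE negb_or (adj_neq u1v) (adj_neq u1z) (adj_neq vz).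
have := girth_no_closing_edge girth7 uniq_u1vz isT isT.
by rewrite /= u1v vz e_sym u1z => /(_ isT).
Qed.

Lemma u1_s2_nonadj : ~~ e u1 s2.
Proof.
rewrite e_sym; apply: (girth_no_closing_edge (x := u1) (p := [:: v; u2; s2]) girth7) => //=.
- by move: path_uniq; rewrite /= => /andP [_ ->].
- by rewrite u1v vu2 u2s2.
Qed.

Lemma s1_s2_nonadj : ~~ e s1 s2.
Proof.
rewrite e_sym; apply: (girth_no_closing_edge (x := s1) (p := [:: u1; v; u2; s2]) girth7) => //=.
by rewrite s1u1 u1v vu2 u2s2.
Qed.

Lemma path_distinct : [/\ s1 != v, s2 != v & s1 != s2].
Proof.
move: path_uniq; rewrite /= !inE !negb_or => /and5P [/and4P [_ -> _ ->] _ /andP [_ vs2] _ _].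
by rewrite eq_sym vs2.
Qed.

Lemma no_common_s1_s2 : no_common_nbr e s1 s2.
Proof.
move=> z s1z s2z; case: (eqVneq z u1) => [Ez | zu1].
  by move: u1_s2_nonadj; rewrite -Ez e_sym s2z.
by case: path_distinct => _ _; rewrite (pendant_nbr_s1 s1z zu1 (_ : e z s2)) ?eqxx // e_sym.
Qed.

Definition swap (P : {set T}) : {set T} := l1 |: (s1 |: (s2 |: (P :\ u1 :\ v))).

Section Exchange.
Variable P : {set T}.
Hypotheses (P_open : open_packing e P) (u1P : u1 \in P) (vP : v \in P).

Lemma s1_notin : s1 \notin P.
Proof.
apply/negP => s1P; case: path_distinct => /eqP s1v _ _; apply: s1v.
by apply: (open_packing_eq P_open s1P vP s1u1); rewrite e_sym.
Qed.

Lemma s2_notin : s2 \notin P.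
Proof.
apply/negP => s2P; case: path_distinct => _ /eqP s2v _; apply: s2v.
by apply: (open_packing_eq P_open s2P vP (_ : e s2 u2) vu2); rewrite e_sym.
Qed.

Lemma l1_notin : l1 \notin P.
Proof.
apply/negP => l1P; move/eqP: l1_neq_u1; apply.
by apply: (open_packing_eq (z := s1) P_open l1P u1P); rewrite e_sym.
Qed.

Notation rest := (P :\ u1 :\ v).

Lemma no_common_s1_rest x : x \in rest -> no_common_nbr e s1 x.
Proof.
rewrite !inE => /and3P [xv _ xP]; have [s1v _ _] := path_distinct.
apply: (no_common_support e_sym P_open vP xP xv s1v _ s1u1 pendant_nbr_s1).
by rewrite e_sym.
Qed.

Lemma no_common_s2_rest x : x \in rest -> no_common_nbr e s2 x.
Proof.
rewrite !inE => /and3P [xv _ xP]; have [_ s2v _] := path_distinct.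
apply: (no_common_support e_sym P_open vP xP xv s2v vu2 _ pendant_nbr_s2).
by rewrite e_sym.
Qed.

Lemma no_common_l1_rest x : x \in rest -> no_common_nbr e l1 x.
Proof.
rewrite !inE => /and3P [_ xu1 xP]; apply: (no_common_pendant pendant_l1).
apply: contra xu1 => xs1; apply/eqP.
by apply: (open_packing_eq P_open xP u1P xs1); rewrite e_sym.
Qed.

Lemma swap_open_packing : open_packing e (swap P).
Proof.
have rest_open : open_packing e rest.
  by apply: open_packingS P_open; apply: subset_trans (subD1set _ _) (subD1set _ _).
have s2_open : open_packing e (s2 |: rest).
  by apply: open_packingU1 => // y /no_common_s2_rest.
have s1_open : open_packing e (s1 |: (s2 |: rest)).
  apply: open_packingU1 => // y; rewrite in_setU1 => /orP [/eqP -> _ | /no_common_s1_rest //].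
  exact: no_common_s1_s2.
apply: open_packingU1 => // y; rewrite !in_setU1 => /or3P [/eqP -> _ | /eqP -> _ | /no_common_l1_rest //].
- by apply: no_common_pendant pendant_l1 _; rewrite e_irr.
- by apply: no_common_pendant pendant_l1 _; rewrite e_sym s1_s2_nonadj.
Qed.

Lemma card_swap : #|swap P| = #|P|.+1.
Proof.
have l1s1 : l1 != s1 by rewrite eq_sym adj_neq.
have l1s2 : l1 != s2 by apply: contraNneq s1_s2_nonadj => <-.
have [_ _ s1s2] := path_distinct.
rewrite /swap !cardsU1 !in_setU1 !in_setD1 (negPf l1s1) (negPf l1s2) (negPf s1s2).
rewrite (negPf l1_notin) (negPf s1_notin) (negPf s2_notin) !andbF /=.
by rewrite (cardsD1 u1 P) (cardsD1 v (P :\ u1)) u1P !inE vP eq_sym (adj_neq u1v).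
Qed.

End Exchange.
End Configuration.

Theorem lemma4 (T : finType) (e : rel T) (s1 u1 v u2 s2 : T) :
  simple_graph e ->
  girth_at_least e 7 ->
  uniq [:: s1; u1; v; u2; s2] ->
  e s1 u1 -> e u1 v -> e v u2 -> e u2 s2 ->
  is_support e s1 -> is_support e s2 ->
  (forall w, e s1 w -> (2 <= deg e w) = (w == u1)) ->
  (forall w, e s2 w -> (2 <= deg e w) = (w == u2)) ->
  ~ in_U e.
Proof.
move=> [e_sym e_irr] girth7 path_uniq s1u1 u1v vu2 u2s2.
move=> /existsP [l1 /andP [s1l1 l1_leaf]] _ deg_nbr_s1 deg_nbr_s2 inU.
have uv_open := open_packing_pair (no_common_u1_v e_sym e_irr girth7 u1v).
have [P P_max /subsetP uvP] := maximal_open_packing_ext uv_open.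
have u1P : u1 \in P by apply: uvP; rewrite !inE eqxx.
have vP : v \in P by apply: uvP; rewrite !inE eqxx orbT.
have P_open := P_max.1.
have swap_open := swap_open_packing e_sym e_irr girth7 path_uniq s1u1 u1v vu2 u2s2
  deg_nbr_s1 deg_nbr_s2 s1l1 l1_leaf P_open u1P vP.
have swap_card := card_swap e_sym e_irr girth7 path_uniq s1u1 u1v vu2 u2s2
  deg_nbr_s1 s1l1 l1_leaf P_open u1P vP.
by have := in_U_card_le inU P_max swap_open; rewrite swap_card ltnn.
Qed.
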